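(* Let $\mathbb G$ be a special 2-group with canonical classifying 3-cocycle $\alpha$, and let $(\beta,c)$, $(\beta',c')$ be character data. Then $$\mathbf{Hom}(\mathbb I_{\beta,c},\mathbb I_{\beta',c'})\simeq\begin{cases}\mathbf 1 & \text{if }\beta\ne\beta',\\ \mathbf{PRep}_{c'/c}(\pi_0(\mathbb G)) & \text{if }\beta=\beta',\end{cases}$$ (when $\beta=\beta'$, $c'/c$ is a 2-cocycle). Moreover, for any character data $(\beta,c)$, there is an equivalence of monoidal categories $\mathbf{End}(\mathbb I_{\beta,c})\simeq\mathbf{Rep}_{\mathbf{Mat}_{\mathbb C}}(\pi_0(\mathbb G))$, where $\mathbf{End}(\mathbb I_{\beta,c})$ carries the monoidal structure given by composition of 1-intertwiners and horizontal composition of 2-intertwiners, and $\mathbf{Rep}_{\mathbf{Mat}_{\mathbb C}}(\pi_0(\mathbb G))$ carries the tensor (Kronecker) product of matrix representations. In particular this holds for the trivial representation $\mathbb I$.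
   Context: A special 2-group $\mathbb G$: skeletal monoidal groupoid, strictly invertible objects, $l,r$ identities; objects form $\pi_0(\mathbb G)$; $\pi_1(\mathbb G)=\mathrm{Aut}(e)$ a $\pi_0(\mathbb G)$-module via $g\cdot u=\gamma_g^{-1}(\delta_g(u))$, $\gamma_g(u)=u\otimes\mathrm{id}_g$, $\delta_g(u)=\mathrm{id}_g\otimes u$; canonical 3-cocycle $\alpha(g_1,g_2,g_3)=\gamma^{-1}_{g_1g_2g_3}(a_{g_1,g_2,g_3})$. $\mathbf{2Mat}_{\mathbb C}$: objects $n\ge0$; for $n,m\ge1$ a 1-morphism $n\to m$ is $(\mathbf R,s)$, $\mathbf R$ an $m\times n$ matrix over $\mathbb N$, $s=(s_i)$ a gauge with $s_i(\mathbf a)\in GL((\mathbf R\mathbf a)_i,\mathbb C)$ ($=1$ if $(\mathbf R\mathbf a)_i=0$), $s_i(\mathbf e_j)=\mathbf I_{R_{ij}}$; a 2-morphism $(\mathbf R,s)\Rightarrow(\mathbf R',s')$ is an $m\times n$ array with $(i,j)$ entry an $R'_{ij}\times R_{ij}$ complex matrix if $R_{ij},R'_{ij}\ne0$, empty otherwise; vertical composition entrywise product; composition $(\tilde{\mathbf R},\tilde s)\circ(\mathbf R,s)=(\tilde{\mathbf R}\mathbf R,\tilde s\ast s)$, $(\tilde s\ast s)_k(\mathbf a)=\tilde s_k(\mathbf R\mathbf a)\big(\bigoplus_{i}\mathbf I_{\tilde R_{ki}}\otimes s_i(\mathbf a)\big)\mathbf P(\tilde{\mathbf R}_k,\mathbf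 R,\mathbf a)\big(\bigoplus_j \tilde s_k(\mathbf R\mathbf e_j)^{-1}\otimes\mathbf I_{a_j}\big)$, $\mathbf P(\cdot)$ fixed permutation matrices (identities when $\tilde{\mathbf R}_k$ or $\mathbf a$ is a standard basis vector, $\mathbf R$ an identity, or $\mathbf R$ one column); horizontal composition $(\tilde{\mathsf T}\circ\mathsf T)_{kj}=\tilde s'_k(\mathbf R'\mathbf e_j)\big(\bigoplus_i\tilde{\mathsf T}_{ki}\otimes\mathsf T_{ij}\big)\tilde s_k(\mathbf R\mathbf e_j)^{-1}$; identities $(\mathbf I_n,\mathbf I)$. $\mathfrak{Rep}_{\mathbf{2Mat}_{\mathbb C}}(\mathbb G)$: objects $(n,\mathbb F)$ with $\mathbb F=(F,F_2,F_0):\mathbb G\to\mathsf{Equiv}_{\mathbf{2Mat}_{\mathbb C}}(n)$ monoidal; 1-intertwiners $(f,\Phi)$, $f:n\to n'$, invertible $\Phi(A):F'(A)\circ f\Rightarrow f\circ F(A)$ natural in $A$ with $\Phi(A\otimes B)\cdot(F'_2(A,B)\circ1_f)=(1_f\circ F_2(A,B))\cdot(\Phi(A)\circ1_{F(B)})\cdot(1_{F'(A)}\circ\Phi(B))$ and $F'_0\circ1_f=(1_f\circ F_0)\cdot\Phi(I)$; composition $(f',\Phi')\circ(f,\Phi)=(f'\circ f,(1_{f'}\circ\Phi(A))\cdot(\Phi'(A)\circ1_f))$; 2-intertwiners $\tau:f\Rightarrow g$ with $\Psi(A)\cdot(1_{F'(A)}\circ\tau)=(\tau\circ1_{F(A)})\cdot\Phi(A)$,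 composed as 2-morphisms of $\mathbf{2Mat}_{\mathbb C}$. $\mathbf{Hom}(\mathcal F,\mathcal F')$ is the category of 1-intertwiners and 2-intertwiners; $\mathbf{End}(\mathcal F)=\mathbf{Hom}(\mathcal F,\mathcal F)$; $\mathbf 1$ is the terminal category. Character data $(\beta,c)$: $\beta:\pi_1(\mathbb G)\to\mathbb C^*$ a homomorphism with $\beta(g\cdot u)=\beta(u)$ for all $g,u$ and $[\beta\circ\alpha]=0$ in $H^3(\pi_0(\mathbb G),\mathbb C^* )$ (trivial action), and $c:\pi_0(\mathbb G)^2\to\mathbb C^*$ a normalized 2-cochain with $\partial c=\beta\circ\alpha$. The character $\mathbb I_{\beta,c}$ is the 1-dimensional representation $(1,\mathbb F)$ with $F(g)=(\mathbf I_1,\mathbf I)$, $F(\varphi)=\beta(\gamma_g^{-1}(\varphi))$ (a $1\times1$ 2-morphism) for $\varphi\in\mathrm{Aut}(g)$, $F_2(g_1,g_2)=c(g_1,g_2)$, $F_0$ identity; $\mathbb I=\mathbb I_{1,1}$ is the trivial representation. For a 2-cocycle $z\in Z^2(G,\mathbb C^* )$, $\mathbf{PRep}_z(G)$ is the category with objects pairs $(r,S)$, $r\ge0$, $S:G\to GL(r,\mathbb C)$ with $S(e)=\mathbf I_r$ and $S(g_1)S(g_2)=z(g_1,g_2)S(g_1g_2)$, and morphisms $(r,S)\to(r',S')$ the $r'\times r$ matrices $T$ with $TS(g)=S'(g)T$ for all $g$. $\mathbf{Rep}_{\mathbf{Mat}_{\mathbb C}}(G)=\mathbf{PRep}_1(G)$,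 the category of finite-dimensional matrix representations, monoidal under Kronecker product. *)

From HB Require Import structures.
From mathcomp Require Import all_boot all_algebra.
From mathcomp Require Import complex mxtens Rstruct.
From Stdlib Require Import ClassicalEpsilon.

Set Implicit Arguments.
Unset Strict Implicit.
Unset Printing Implicit Defensive.

Import GRing.Theory.
Local Open Scope ring_scope.

Definition C : fieldType := (Rdefinitions.R)[i].

(* A skeletal monoidal groupoid: objects form a group (strictly        *)
(* invertible objects, strict unit); a morphism phi only goes from     *)
(* s2dom phi to itself (skeletal); unitors l, r are identities.        *)
(* s2comp f g = f o g (f after g).  s2assoc x y z = a_{x,y,z}.          *)
Record special2group := Special2Group {
  s2obj : Type;
  gmul : s2obj -> s2obj -> s2obj;
  gone : s2obj;
  ginv : s2obj -> s2obj;
  gmulA : forall x y z, gmul x (gmul y z) = gmul (gmul x y) z;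
  gmul1g : forall x, gmul gone x = x;
  gmulg1 : forall x, gmul x gone = x;
  gmulVg : forall x, gmul (ginv x) x = gone;
  gmulgV : forall x, gmul x (ginv x) = gone;
  s2mor : Type;
  s2dom : s2mor -> s2obj;
  s2comp : s2mor -> s2mor -> s2mor;
  s2id : s2obj -> s2mor;
  s2inv : s2mor -> s2mor;
  s2tens : s2mor -> s2mor -> s2mor;
  s2assoc : s2obj -> s2obj -> s2obj -> s2mor;
  s2dom_id : forall x, s2dom (s2id x) = x;
  s2dom_comp : forall f g, s2dom f = s2dom g -> s2dom (s2comp f g) = s2dom f;
  s2dom_inv : forall f, s2dom (s2inv f) = s2dom f;
  s2compA : forall f g h, s2dom f = s2dom g -> s2dom g = s2dom h ->
    s2comp f (s2comp g h) = s2comp (s2comp f g) h;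
  s2comp1f : forall f, s2comp (s2id (s2dom f)) f = f;
  s2compf1 : forall f, s2comp f (s2id (s2dom f)) = f;
  s2compfV : forall f, s2comp f (s2inv f) = s2id (s2dom f);
  s2compVf : forall f, s2comp (s2inv f) f = s2id (s2dom f);
  s2dom_tens : forall f g, s2dom (s2tens f g) = gmul (s2dom f) (s2dom g);
  s2tens_id : forall x y, s2tens (s2id x) (s2id y) = s2id (gmul x y);
  s2tens_comp : forall f f' g g', s2dom f = s2dom f' -> s2dom g = s2dom g' ->
    s2tens (s2comp f f') (s2comp g g') = s2comp (s2tens f g) (s2tens f' g');
  s2dom_assoc : forall x y z, s2dom (s2assoc x y z) = gmul (gmul x y) z;
  s2assoc_nat : forall f g h,
    s2comp (s2assoc (s2dom f) (s2dom g) (s2dom h)) (s2tens (s2tens f g) h)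
    = s2comp (s2tens f (s2tens g h)) (s2assoc (s2dom f) (s2dom g) (s2dom h));
  (* unitors l, r are identities: their naturality *)
  s2tens1f : forall f, s2tens (s2id gone) f = f;
  s2tensf1 : forall f, s2tens f (s2id gone) = f;
  s2pentagon : forall x y z w,
    s2comp (s2assoc x y (gmul z w)) (s2assoc (gmul x y) z w)
    = s2comp (s2tens (s2id x) (s2assoc y z w))
        (s2comp (s2assoc x (gmul y z) w) (s2tens (s2assoc x y z) (s2id w)));
  (* triangle, with l_y = id_y and r_x = id_x *)
  s2triangle : forall x y,
    s2comp (s2tens (s2id x) (s2id y)) (s2assoc x gone y)
    = s2tens (s2id x) (s2id y)
}.

Arguments gmul {G} : rename.
Arguments gone {G} : rename.
Arguments s2dom {G} : rename.
Arguments s2comp {G} : rename.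
Arguments s2id {G} : rename.
Arguments s2tens {G} : rename.
Arguments s2assoc {G} : rename.

Section TwoGroup.
Variable G : special2group.

Definition in_pi1 (u : s2mor G) : Prop := s2dom u = gone.

Definition gamma_inv (g : s2obj G) (phi : s2mor G) : s2mor G :=
  epsilon (inhabits (s2id gone))
    (fun u => s2dom u = gone /\ s2tens u (s2id g) = phi).

Definition pi1_act (g : s2obj G) (u : s2mor G) : s2mor G :=
  gamma_inv g (s2tens (s2id g) u).

Definition alpha3 (x y z : s2obj G) : s2mor G :=
  gamma_inv (gmul (gmul x y) z) (s2assoc x y z).

Definition cobound2 (c : s2obj G -> s2obj G -> C) (x y z : s2obj G) : C :=
  c y z * c x (gmul y z) / (c (gmul x y) z * c x y).

Definition is_2cocycle (z : s2obj G -> s2obj G -> C) : Prop :=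
  (forall x y, z x y != 0) /\ (forall x y w, cobound2 z x y w = 1).

(* character data (beta, c); beta is only relevant on pi_1 *)
Definition char_data (b : s2mor G -> C) (c : s2obj G -> s2obj G -> C) : Prop :=
  [/\ forall u, in_pi1 u -> b u != 0,
      forall u v, in_pi1 u -> in_pi1 v -> b (s2comp u v) = b u * b v &
      forall g u, in_pi1 u -> b (pi1_act g u) = b u] /\
  [/\ forall x y, c x y != 0,
      forall x, (c gone x = 1 /\ c x gone = 1) &
      forall x y z, cobound2 c x y z = b (alpha3 x y z)].

End TwoGroup.

(* 2Mat_C restricted to the object 1: 1-morphisms 1 -> 1 are (r, s)    *)
(* with r : nat (a 1x1 matrix over N) and a gauge s(a) in GL(r a)      *)
(* for a in N^1 = nat.  A 2-morphism (r,s) => (r',s') is an r' x r      *)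
(* matrix (empty if r = 0 or r' = 0).                                   *)
Record mor11 := Mor11 { mr : nat; mgauge : forall a : nat, 'M[C]_(mr * a) }.

Definition is_mor11 (f : mor11) : Prop :=
  (forall a, mgauge f a \in unitmx) /\
  mgauge f 1 = castmx (esym (muln1 (mr f)), esym (muln1 (mr f))) 1%:M.

Definition id11 : mor11 :=
  Mor11 (fun a => castmx (esym (mul1n a), esym (mul1n a)) (1%:M : 'M[C]_a)).

(* composition g o f; the permutation matrix P is the identity here
   (the matrix of f has a single column) *)
Definition comp11 (g f : mor11) : mor11 :=
  @Mor11 (mr g * mr f) (fun a =>
    castmx (mulnA _ _ _, mulnA _ _ _)
      (mgauge g (mr f * a) *m ((1%:M : 'M[C]_(mr g)) *t mgauge f a))
    *m (invmx (mgauge g (mr f)) *t (1%:M : 'M[C]_a))).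

Definition mor2 (f g : mor11) := 'M[C]_(mr g, mr f).
Definition id2 (f : mor11) : mor2 f f := 1%:M.

Definition hcomp (f' g' f g : mor11) (t' : mor2 f' g') (t : mor2 f g)
  : mor2 (comp11 f' f) (comp11 g' g) :=
  mgauge g' (mr g) *m (t' *t t) *m invmx (mgauge f' (mr f)).
Arguments hcomp : clear implicits.

Record rep1 (G : special2group) := Rep1 {
  Fob : s2obj G -> mor11;
  Fmor : forall phi : s2mor G, mor2 (Fob (s2dom phi)) (Fob (s2dom phi));
  F2 : forall x y : s2obj G, mor2 (comp11 (Fob x) (Fob y)) (Fob (gmul x y));
  F0 : mor2 (Fob gone) id11
}.

Definition Ichar (G : special2group) (b : s2mor G -> C)
  (c : s2obj G -> s2obj G -> C) : rep1 G :=
  @Rep1 G (fun _ => id11)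
    (fun phi => ((b (gamma_inv (s2dom phi) phi))%:M : 'M[C]_1))
    (fun x y => ((c x y)%:M : 'M[C]_1))
    (1%:M : 'M[C]_1).

Section Intertwiners.
Variable G : special2group.

Record intw (F F' : rep1 G) := Intw {
  ifun : mor11;
  iPhi : forall x : s2obj G, mor2 (comp11 (Fob F' x) ifun) (comp11 ifun (Fob F x))
}.

Definition is_intw (F F' : rep1 G) (X : intw F F') : Prop :=
  let f := ifun X in let Phi := iPhi X in
  [/\ is_mor11 f,
      forall x, exists Psi : mor2 (comp11 f (Fob F x)) (comp11 (Fob F' x) f),
        Psi *m Phi x = 1%:M /\ Phi x *m Psi = 1%:M,
      forall phi : s2mor G,
        Phi (s2dom phi)
          *m hcomp (Fob F' (s2dom phi)) (Fob F' (s2dom phi)) f f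
               (Fmor F' phi) (id2 f)
        = hcomp f f (Fob F (s2dom phi)) (Fob F (s2dom phi))
            (id2 f) (Fmor F phi)
          *m Phi (s2dom phi),
      (* compatibility with F2 (strict associativity of 2Mat_C on the
         object 1 is used, made explicit by the dimension casts) *)
      forall x y,
        Phi (gmul x y)
          *m hcomp (comp11 (Fob F' x) (Fob F' y)) (Fob F' (gmul x y)) f f
               (F2 F' x y) (id2 f)
        = hcomp f f (comp11 (Fob F x) (Fob F y)) (Fob F (gmul x y))
            (id2 f) (F2 F x y)
          *m castmx (esym (mulnA _ _ _), erefl)
               (hcomp (comp11 (Fob F' x) f) (comp11 f (Fob F x))
                  (Fob F y) (Fob F y) (Phi x) (id2 (Fob F y)))
          *m castmx (mulnA _ _ _, mulnA _ _ _)
               (hcomp (Fob F' x) (Fob F' x)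
                  (comp11 (Fob F' y) f) (comp11 f (Fob F y))
                  (id2 (Fob F' x)) (Phi y)) &
      (* compatibility with F0 (unit laws 1 o f = f = f o 1) *)
      castmx (etrans (mul1n _) (esym (muln1 _)), erefl)
          (hcomp (Fob F' gone) id11 f f (F0 F') (id2 f))
        = hcomp f f (Fob F gone) id11 (id2 f) (F0 F) *m Phi gone].

Definition is_2intw (F F' : rep1 G) (X Y : intw F F')
  (t : mor2 (ifun X) (ifun Y)) : Prop :=
  forall x,
    iPhi Y x *m hcomp (Fob F' x) (Fob F' x) (ifun X) (ifun Y) (id2 (Fob F' x)) t
    = hcomp (ifun X) (ifun Y) (Fob F x) (Fob F x) t (id2 (Fob F x)) *m iPhi X x.

Definition intw_comp (F F' F'' : rep1 G) (Y : intw F' F'') (X : intw F F')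
  : intw F F'' :=
  @Intw F F'' (comp11 (ifun Y) (ifun X)) (fun x =>
    castmx (mulnA _ _ _, erefl)
      (hcomp (ifun Y) (ifun Y)
         (comp11 (Fob F' x) (ifun X)) (comp11 (ifun X) (Fob F x))
         (id2 (ifun Y)) (iPhi X x)
       *m castmx (esym (mulnA _ _ _), esym (mulnA _ _ _))
            (hcomp (comp11 (Fob F'' x) (ifun Y)) (comp11 (ifun Y) (Fob F' x))
               (ifun X) (ifun X) (iPhi Y x) (id2 (ifun X))))).

Definition intw_id (F : rep1 G) : intw F F :=
  @Intw F F id11 (fun x =>
    castmx (esym (mul1n _), esym (muln1 _)) (1%:M : 'M[C]_(mr (Fob F x)))).

End Intertwiners.

(* Categories, presented by raw objects/morphisms and validity         *)
(* predicates (the category is the valid part).                        *)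
Record cat := Cat {
  cob : Type;
  cobP : cob -> Prop;
  chom : cob -> cob -> Type;
  chomP : forall x y, chom x y -> Prop;
  cid : forall x, chom x x;
  ccomp : forall x y z, chom y z -> chom x y -> chom x z
}.
Arguments cob : clear implicits.
Arguments chom : clear implicits.
Arguments cobP {c} : rename.
Arguments chomP {c x y} : rename.
Arguments cid {c} : rename.
Arguments ccomp {c x y z} : rename.

Record functor (A B : cat) := Functor {
  fob : cob A -> cob B;
  fhom : forall x y, chom A x y -> chom B (fob x) (fob y)
}.
Arguments fhom {A B} F {x y} : rename.

Definition is_functor (A B : cat) (F : functor A B) : Prop :=
  [/\ forall x, cobP x -> cobP (fob F x),
      forall x y (f : chom A x y), cobP x -> cobP y -> chomP f ->
        chomP (fhom F f),
      forall x, cobP x -> fhom F (cid x) = cid (fob F x) &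
      forall x y z (g : chom A y z) (f : chom A x y),
        cobP x -> cobP y -> cobP z -> chomP g -> chomP f ->
        fhom F (ccomp g f) = ccomp (fhom F g) (fhom F f)].

Definition is_iso (A : cat) (x y : cob A) (f : chom A x y) : Prop :=
  chomP f /\ exists g : chom A y x,
    [/\ chomP g, ccomp g f = cid x & ccomp f g = cid y].

Definition fully_faithful (A B : cat) (F : functor A B) : Prop :=
  forall x y, cobP x -> cobP y ->
    (forall f f' : chom A x y, chomP f -> chomP f' ->
       fhom F f = fhom F f' -> f = f') /\
    (forall g : chom B (fob F x) (fob F y), chomP g ->
       exists f : chom A x y, chomP f /\ fhom F f = g).

Definition ess_surj (A B : cat) (F : functor A B) : Prop :=
  forall b, cobP b -> exists x, cobP x /\
    exists f : chom B (fob F x) b, is_iso f.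

Definition cat_equiv (A B : cat) : Prop :=
  exists F : functor A B, [/\ is_functor F, fully_faithful F & ess_surj F].

Definition unitCat : cat :=
  @Cat unit (fun _ => True) (fun _ _ => unit) (fun _ _ _ => True)
    (fun _ => tt) (fun _ _ _ _ _ => tt).

Definition HomCat (G : special2group) (F F' : rep1 G) : cat :=
  @Cat (intw F F') (@is_intw G F F')
    (fun X Y => mor2 (ifun X) (ifun Y)) (@is_2intw G F F')
    (fun X => id2 (ifun X)) (fun X Y Z t s => t *m s).

Record prep (G : special2group) := PRep { pr : nat; pS : s2obj G -> 'M[C]_pr }.

Definition PRepCat (G : special2group) (z : s2obj G -> s2obj G -> C) : cat :=
  @Cat (prep G)
    (fun X => [/\ forall g, pS X g \in unitmx, pS X gone = 1%:M &
                 forall g h, pS X g *m pS X h = z g h *: pS X (gmul g h)])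
    (fun X Y => 'M[C]_(pr Y, pr X))
    (fun X Y T => forall g, T *m pS X g = pS Y g *m T)
    (fun X => 1%:M) (fun X Y Z T S => T *m S).

Arguments PRepCat : clear implicits.

Record moncat := MonCat {
  mcat :> cat;
  mtensO : cob mcat -> cob mcat -> cob mcat;
  mtensH : forall x x' y y', chom mcat x x' -> chom mcat y y' ->
    chom mcat (mtensO x y) (mtensO x' y');
  munit : cob mcat;
  massocM : forall x y z,
    chom mcat (mtensO (mtensO x y) z) (mtensO x (mtensO y z));
  mlunit : forall x, chom mcat (mtensO munit x) x;
  mrunit : forall x, chom mcat (mtensO x munit) x
}.
Arguments mtensO {m} : rename.
Arguments mtensH {m x x' y y'} : rename.
Arguments munit {m} : rename.
Arguments massocM {m} : rename.
Arguments mlunit {m} : rename.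
Arguments mrunit {m} : rename.

Record monfunctor (A B : moncat) := MonFunctor {
  mfun :> functor A B;
  mfmu : forall x y,
    chom B (mtensO (fob mfun x) (fob mfun y)) (fob mfun (mtensO x y));
  mfeps : chom B munit (fob mfun munit)
}.

Definition is_strong_monoidal (A B : moncat) (F : monfunctor A B) : Prop :=
  [/\ is_functor F,
      forall x y, cobP x -> cobP y -> is_iso (mfmu F x y) &
      is_iso (mfeps F)] /\
  [/\
      forall x x' y y' (f : chom A x x') (g : chom A y y'),
        cobP x -> cobP x' -> cobP y -> cobP y' -> chomP f -> chomP g ->
        ccomp (fhom F (mtensH f g)) (mfmu F x y)
        = ccomp (mfmu F x' y') (mtensH (fhom F f) (fhom F g)),
      forall x y z, cobP x -> cobP y -> cobP z ->
        ccomp (fhom F (massocM x y z))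
          (ccomp (mfmu F (mtensO x y) z) (mtensH (mfmu F x y) (cid (fob F z))))
        = ccomp (mfmu F x (mtensO y z))
            (ccomp (mtensH (cid (fob F x)) (mfmu F y z))
               (massocM (fob F x) (fob F y) (fob F z))),
      forall x, cobP x ->
        ccomp (fhom F (mlunit x))
          (ccomp (mfmu F munit x) (mtensH (mfeps F) (cid (fob F x))))
        = mlunit (fob F x) &
      forall x, cobP x ->
        ccomp (fhom F (mrunit x))
          (ccomp (mfmu F x munit) (mtensH (cid (fob F x)) (mfeps F)))
        = mrunit (fob F x)].

Definition monoidal_equiv (A B : moncat) : Prop :=
  exists F : monfunctor A B,
    [/\ is_strong_monoidal F, fully_faithful F & ess_surj F].

(* End(F) with tensor = composition of 1-intertwiners (X (x) Y = X o Y)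
   and horizontal composition of 2-intertwiners; 2Mat_C is strictly
   associative and unital on the object 1, so associator and unitors are
   identity matrices (up to dimension casts). *)
Definition EndMon (G : special2group) (F : rep1 G) : moncat :=
  @MonCat (HomCat F F)
    (fun X Y => intw_comp X Y)
    (fun X X' Y Y' t s => hcomp (ifun X) (ifun X') (ifun Y) (ifun Y') t s)
    (intw_id F)
    (fun X Y Z => castmx (erefl, mulnA _ _ _) 1%:M)
    (fun X => castmx (erefl, esym (mul1n _)) 1%:M)
    (fun X => castmx (erefl, esym (muln1 _)) 1%:M).

Definition RepMon (G : special2group) : moncat :=
  @MonCat (PRepCat G (fun _ _ => 1))
    (fun X Y => @PRep G (pr X * pr Y) (fun g => pS X g *t pS Y g))
    (fun X X' Y Y' T S => T *t S)
    (@PRep G 1 (fun _ => 1%:M))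
    (fun X Y Z => castmx (erefl, mulnA _ _ _) 1%:M)
    (fun X => castmx (erefl, esym (mul1n _)) 1%:M)
    (fun X => castmx (erefl, esym (muln1 _)) 1%:M).

(* A 1-intertwiner (f, Phi) between the characters I_{b,c} and I_{b',c'},
   with f = (r, s), amounts (after removing the unit 1-morphisms) to matrices
   P(g) := Phi(g) in GL_r(C), and its axioms become
     b'(gamma_g^-1 phi) P(g) = b(gamma_g^-1 phi) P(g),
     c'(g,h) P(gh) = c(g,h) P(g) P(h),   P(e) = 1,
   while 2-intertwiners become matrices intertwining the P's.  If b(u) <> b'(u)
   for some u in pi_1, naturality at u forces r = 0 and Hom is terminal.  If
   b = b', naturality is automatic and P is precisely a c'/c-projective
   representation; each one is realised by an intertwiner with trivial gauge.
   In End(I_{b,c}) the matrix of (f,Phi) o (g,Psi) is P_f (x) P_g conjugated by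
   the gauge s_f(r_g); these gauges make the functor strong monoidal.
   Finally, gamma_g^-1 is well defined because every automorphism of g has the
   form u (x) id_g, by naturality of the associator a_{g,g^-1,g}. *)

From mathcomp Require Import all_boot all_algebra.
From mathcomp Require Import mxtens ring.
From Stdlib Require Import ClassicalEpsilon.
Set Implicit Arguments.
Unset Strict Implicit.
Unset Printing Implicit Defensive.
Import GRing.Theory.
Local Open Scope ring_scope.

Section CastEquality.
Variable R : fieldType.

Definition mxeq m n m' n' (A : 'M[R]_(m, n)) (B : 'M[R]_(m', n')) : Prop :=
  exists e : (m = m') * (n = n'), castmx e A = B.
Local Infix "=~" := mxeq (at level 70).

Lemma mxeq_refl m n (A : 'M[R]_(m, n)) : A =~ A.
Proof. by exists (erefl, erefl); rewrite castmx_id. Qed.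

Lemma mxeq_sym m n m' n' (A : 'M[R]_(m, n)) (B : 'M[R]_(m', n')) :
  A =~ B -> B =~ A.
Proof. by case=> [[e1 e2] <-]; exists (esym e1, esym e2); rewrite castmxK. Qed.

Lemma mxeq_trans m n m' n' m'' n'' (A : 'M[R]_(m, n)) (B : 'M[R]_(m', n'))
    (D : 'M[R]_(m'', n'')) :
  A =~ B -> B =~ D -> A =~ D.
Proof.
by case=> [[e1 e2] <-] [[e3 e4] <-]; exists (etrans e1 e3, etrans e2 e4);
  rewrite castmx_comp.
Qed.

Lemma castmx_mxeq m n m' n' (e : (m = m') * (n = n')) (A : 'M[R]_(m, n)) :
  castmx e A =~ A.
Proof. by apply: mxeq_sym; exists e. Qed.

Lemma mxeq_castmx m n m' n' m'' n'' (e : (m = m') * (n = n'))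
    (A : 'M[R]_(m, n)) (B : 'M[R]_(m'', n'')) :
  A =~ B -> castmx e A =~ B.
Proof. exact: mxeq_trans (castmx_mxeq _ _). Qed.

Lemma mxeq_eq m n (A B : 'M[R]_(m, n)) : A =~ B -> A = B.
Proof.
case=> [[e1 e2] <-].
by rewrite (eq_irrelevance e1 erefl) (eq_irrelevance e2 erefl) castmx_id.
Qed.

Lemma mxeq_eq_iff m n m' n' (A B : 'M[R]_(m, n)) (A' B' : 'M[R]_(m', n')) :
  A =~ A' -> B =~ B' -> (A = B <-> A' = B').
Proof.
move=> hA hB; split=> E; apply: mxeq_eq.
  by apply: mxeq_trans (mxeq_sym hA) _; rewrite E.
by apply: mxeq_trans hA _; rewrite E; exact: mxeq_sym.
Qed.

Lemma mxeq_mul m n p m' n' p' (A : 'M[R]_(m, n)) (B : 'M[R]_(n, p))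
    (A' : 'M[R]_(m', n')) (B' : 'M[R]_(n', p')) :
  A =~ A' -> B =~ B' -> A *m B =~ A' *m B'.
Proof.
case=> [[e1 e2] <-] [[e3 e4] <-]; subst m' n' p'.
by rewrite (eq_irrelevance e3 erefl) !castmx_id; exact: mxeq_refl.
Qed.

Lemma mxeq_tens m n p q m' n' p' q' (A : 'M[R]_(m, n)) (B : 'M[R]_(p, q))
    (A' : 'M[R]_(m', n')) (B' : 'M[R]_(p', q')) :
  A =~ A' -> B =~ B' -> A *t B =~ A' *t B'.
Proof.
case=> [[e1 e2] <-] [[e3 e4] <-]; subst m' n' p' q'.
by rewrite !castmx_id; exact: mxeq_refl.
Qed.

Lemma mxeq_inv n n' (A : 'M[R]_n) (A' : 'M[R]_n') :
  A =~ A' -> invmx A =~ invmx A'.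
Proof.
case=> [[e1 e2] <-]; subst n'.
by rewrite (eq_irrelevance e2 erefl) castmx_id; exact: mxeq_refl.
Qed.

Lemma scalar_mxeq m m' (k : R) : m = m' -> (k%:M : 'M[R]_m) =~ (k%:M : 'M[R]_m').
Proof. by move=> e; case: m' / e; exact: mxeq_refl. Qed.

Lemma tensmx11 m n : (1%:M : 'M[R]_m) *t (1%:M : 'M[R]_n) = 1%:M.
Proof.
apply/matrixP=> i j.
case: (mxtens_indexP i)=> i0 i1; case: (mxtens_indexP j)=> j0 j1.
rewrite tensmxE !mxE.
have -> : (mxtens_index (i0, i1) == mxtens_index (j0, j1))
          = (i0 == j0) && (i1 == j1).
  by rewrite (can_eq (@mxtens_indexK _ _)) xpair_eqE.
by case: (i0 == j0); case: (i1 == j1); rewrite /= ?mulr1 ?mulr0 ?mul0r.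
Qed.

Lemma tens_scalar_mxeq m n (k : R) (A : 'M[R]_(m, n)) :
  (k%:M : 'M[R]_1) *t A =~ k *: A.
Proof. rewrite tens_scalar_mx; exact: castmx_mxeq. Qed.

Lemma tens_mx_scalar_mxeq m n (k : R) (A : 'M[R]_(m, n)) :
  A *t (k%:M : 'M[R]_1) =~ k *: A.
Proof. rewrite tens_mx_scalar; exact: castmx_mxeq. Qed.

Lemma thinmx_eq m n (A B : 'M[R]_(m, n)) : n = 0%N -> A = B.
Proof. by move=> n0; subst n; rewrite !thinmx0. Qed.

End CastEquality.

Infix "=~" := mxeq (at level 70).

Section SpecialTwoGroup.
Variable G : special2group.

Lemma s2comp_invK (a v : s2mor G) :
  s2dom v = s2dom a -> s2comp (s2inv a) (s2comp a v) = v.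
Proof. by move=> dv; rewrite s2compA ?s2dom_inv // s2compVf -dv s2comp1f. Qed.

(* Naturality of a := a_{x,x^-1,x} gives a o ((w (x) id) (x) id_x) = w o a;
   with w := a o phi o a^-1 this reads phi = u (x) id_x, u := w (x) id. *)
Lemma s2mor_tens_id (phi : s2mor G) :
  exists u, s2dom u = gone /\ s2tens u (s2id (s2dom phi)) = phi.
Proof.
set x := s2dom phi; set a := s2assoc x (ginv x) x.
have da : s2dom a = x by rewrite /a s2dom_assoc gmulgV gmul1g.
set w := s2comp a (s2comp phi (s2inv a)).
have dpa : s2dom (s2comp phi (s2inv a)) = x by rewrite s2dom_comp // s2dom_inv da.
have dw : s2dom w = x by rewrite /w s2dom_comp ?da ?dpa.
exists (s2tens w (s2id (ginv x))); split.
  by rewrite s2dom_tens dw s2dom_id gmulgV.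
have assoc_w := s2assoc_nat w (s2id (ginv x)) (s2id x).
rewrite dw !s2dom_id -/a s2tens_id gmulVg s2tensf1 in assoc_w.
have dv : s2dom (s2tens (s2tens w (s2id (ginv x))) (s2id x)) = s2dom a.
  by rewrite !s2dom_tens dw !s2dom_id gmulgV gmul1g da.
rewrite -(s2comp_invK dv) assoc_w /w -s2compA ?dpa ?da //.
by rewrite -s2compA ?s2dom_inv ?da // s2compVf da s2compf1 s2comp_invK.
Qed.

Lemma gamma_inv_pi1 (x : s2obj G) (phi : s2mor G) :
  s2dom phi = x -> in_pi1 (gamma_inv x phi).
Proof.
move=> <-; rewrite /in_pi1 /gamma_inv.
by case: (epsilon_spec (inhabits (s2id gone)) _ (s2mor_tens_id phi)).
Qed.

Lemma gamma_inv1 (u : s2mor G) : in_pi1 u -> gamma_inv gone u = u.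
Proof.
move=> du; rewrite /gamma_inv.
case: (epsilon_spec (inhabits (s2id gone))
  (fun v => s2dom v = gone /\ s2tens v (s2id gone) = u)) => [|_];
  by [exists u; rewrite s2tensf1 | rewrite s2tensf1].
Qed.

End SpecialTwoGroup.

Lemma gauge_unit (f : mor11) a : is_mor11 f -> mgauge f a \in unitmx.
Proof. by case=> + _; apply. Qed.

Lemma gauge1 (f : mor11) : is_mor11 f -> mgauge f 1 =~ (1%:M : 'M[C]_(mr f)).
Proof. by case=> _ ->; exact: castmx_mxeq. Qed.

Lemma gauge_eq (f : mor11) a a' : a = a' -> mgauge f a =~ mgauge f a'.
Proof. by move=> ->; exact: mxeq_refl. Qed.

Lemma gauge_id11 a : mgauge id11 a =~ (1%:M : 'M[C]_a).
Proof. exact: castmx_mxeq. Qed.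

Lemma gauge_comp11_id11 (f : mor11) a :
  is_mor11 f -> mgauge (comp11 f id11) a =~ mgauge f a.
Proof.
move=> Hf; rewrite /comp11 /=.
apply: mxeq_trans (mxeq_mul (mxeq_castmx _ (mxeq_mul (gauge_eq f (mul1n a))
   (mxeq_tens (mxeq_refl _) (gauge_id11 a))))
   (mxeq_tens (mxeq_inv (gauge1 Hf)) (mxeq_refl _))) _.
by rewrite invmx1 !tensmx11 !mulmx1; exact: mxeq_refl.
Qed.

Lemma gauge_id11_comp11 (f : mor11) a : mgauge (comp11 id11 f) a =~ mgauge f a.
Proof.
rewrite /comp11 /= tens_scalar1mx.
apply: mxeq_trans (mxeq_mul (mxeq_castmx _ (mxeq_mul (gauge_id11 _)
   (castmx_mxeq _ _))) (mxeq_tens (mxeq_inv (gauge_id11 _)) (mxeq_refl _))) _.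
by rewrite invmx1 !tensmx11 mulmx1 mul1mx; exact: mxeq_refl.
Qed.

Lemma gauge1_comp11_id11 (f : mor11) : is_mor11 f ->
  mgauge (comp11 f id11) 1 =~ (1%:M : 'M[C]_(mr (comp11 f id11))).
Proof.
move=> Hf; apply: mxeq_trans (gauge_comp11_id11 _ Hf) _.
by apply: mxeq_trans (gauge1 Hf) _; apply: scalar_mxeq; rewrite /= muln1.
Qed.

Lemma gauge1_id11_comp11 (f : mor11) : is_mor11 f ->
  mgauge (comp11 id11 f) 1 =~ (1%:M : 'M[C]_(mr (comp11 id11 f))).
Proof.
move=> Hf; apply: mxeq_trans (gauge_id11_comp11 _ _) _.
by apply: mxeq_trans (gauge1 Hf) _; apply: scalar_mxeq; rewrite /= mul1n.
Qed.

Section HorizontalComposition.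
Variables (f' g' f g : mor11).

Lemma hcomp_scalar_l (t : mor2 f' g') (k : C) :
  (forall a, mgauge g' a =~ (1%:M : 'M[C]_a)) ->
  (forall a, mgauge f' a =~ (1%:M : 'M[C]_a)) ->
  t =~ (k%:M : 'M[C]_1) ->
  hcomp f' g' f f t (id2 f) =~ (k%:M : 'M[C]_(mr f)).
Proof.
move=> Hg' Hf' Ht; rewrite /hcomp /id2.
apply: mxeq_trans (mxeq_mul (mxeq_mul (Hg' _)
   (mxeq_trans (mxeq_tens Ht (mxeq_refl 1%:M)) (tens_scalar_mxeq _ _)))
   (mxeq_inv (Hf' _))) _.
by rewrite invmx1 mulmx1 mul1mx scalemx1; exact: mxeq_refl.
Qed.

Lemma hcomp_scalar_r (t : mor2 g g') (k : C) :
  mgauge f' 1 =~ (1%:M : 'M[C]_(mr f')) -> mr g' = 1%N -> mr g = 1%N ->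
  t =~ (k%:M : 'M[C]_1) ->
  hcomp f' f' g g' (id2 f') t =~ (k%:M : 'M[C]_(mr f')).
Proof.
move=> Hf' g'1 g1 Ht; rewrite /hcomp /id2.
apply: mxeq_trans (mxeq_mul (mxeq_mul (mxeq_trans (gauge_eq f' g'1) Hf')
   (mxeq_trans (mxeq_tens (mxeq_refl 1%:M) Ht) (tens_mx_scalar_mxeq _ _)))
   (mxeq_inv (mxeq_trans (gauge_eq f' g1) Hf'))) _.
by rewrite invmx1 mulmx1 mul1mx scalemx1; exact: mxeq_refl.
Qed.

Lemma hcomp_id11_l (t : mor2 f g) : hcomp id11 id11 f g (id2 id11) t =~ t.
Proof.
rewrite /hcomp /id2 tens_scalar1mx.
apply: mxeq_trans (mxeq_mul (mxeq_mul (gauge_id11 _) (castmx_mxeq _ t))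
   (mxeq_inv (gauge_id11 _))) _.
by rewrite invmx1 mulmx1 mul1mx; exact: mxeq_refl.
Qed.

Lemma hcomp_id11_r (t : mor2 f g) :
  mgauge f 1 =~ (1%:M : 'M[C]_(mr f)) -> mgauge g 1 =~ (1%:M : 'M[C]_(mr g)) ->
  hcomp f g id11 id11 t (id2 id11) =~ t.
Proof.
move=> Hf Hg; rewrite /hcomp /id2.
apply: mxeq_trans (mxeq_mul (mxeq_mul Hg (tens_mx_scalar_mxeq 1 t))
   (mxeq_inv Hf)) _.
by rewrite invmx1 mulmx1 mul1mx scale1r; exact: mxeq_refl.
Qed.

End HorizontalComposition.

Section IntertwinersOfCharacters.
Variable G : special2group.
Variables (b b' : s2mor G -> C) (c c' : s2obj G -> s2obj G -> C).
Local Notation F := (Ichar b c).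
Local Notation F' := (Ichar b' c').
Local Notation gam phi := (gamma_inv (s2dom phi) phi).

Definition intw_mx (X : intw F F') x : 'M[C]_(mr (ifun X)) :=
  castmx (muln1 _, mul1n _) (iPhi X x).

Lemma iPhi_mxeq (X : intw F F') x : iPhi X x =~ intw_mx X x.
Proof. exact: mxeq_sym (castmx_mxeq _ _). Qed.

Lemma intw_invertibleE (X : intw F F') x :
  (exists Psi : mor2 (comp11 (ifun X) (Fob F x)) (comp11 (Fob F' x) (ifun X)),
      Psi *m iPhi X x = 1%:M /\ iPhi X x *m Psi = 1%:M)
  <-> intw_mx X x \in unitmx.
Proof.
split=> [[Psi [PsiK _]] | Pu].
  have: castmx (mul1n _, muln1 _) Psi *m intw_mx X x = 1%:M.
    apply: mxeq_eq; apply: mxeq_trans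
      (mxeq_mul (castmx_mxeq _ _) (mxeq_sym (iPhi_mxeq _ _))) _.
    by rewrite PsiK; apply: scalar_mxeq; rewrite /= ?mul1n ?muln1.
  by case/mulmx1_unit.
exists (castmx (esym (mul1n _), esym (muln1 _)) (invmx (intw_mx X x))); split.
  apply: mxeq_eq; apply: mxeq_trans (mxeq_mul (castmx_mxeq _ _) (iPhi_mxeq _ _)) _.
  by rewrite mulVmx //; apply: scalar_mxeq; rewrite /= ?mul1n ?muln1.
apply: mxeq_eq; apply: mxeq_trans (mxeq_mul (iPhi_mxeq _ _) (castmx_mxeq _ _)) _.
by rewrite mulmxV //; apply: scalar_mxeq; rewrite /= ?mul1n ?muln1.
Qed.

Section Translation.
Variable X : intw F F'.
Hypothesis Xmor : is_mor11 (ifun X).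

Lemma intw_naturalE (phi : s2mor G) :
  (iPhi X (s2dom phi)
     *m hcomp (Fob F' (s2dom phi)) (Fob F' (s2dom phi)) (ifun X) (ifun X)
          (Fmor F' phi) (id2 (ifun X))
   = hcomp (ifun X) (ifun X) (Fob F (s2dom phi)) (Fob F (s2dom phi))
       (id2 (ifun X)) (Fmor F phi)
     *m iPhi X (s2dom phi))
  <-> b' (gam phi) *: intw_mx X (s2dom phi) = b (gam phi) *: intw_mx X (s2dom phi).
Proof.
rewrite -mul_mx_scalar -mul_scalar_mx; apply: mxeq_eq_iff.
  apply: mxeq_mul; first exact: iPhi_mxeq.
  by apply: hcomp_scalar_l; [exact: gauge_id11 | exact: gauge_id11 | exact: mxeq_refl].
apply: mxeq_mul; last exact: iPhi_mxeq.
by apply: hcomp_scalar_r => //; [exact: gauge1 | exact: mxeq_refl].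
Qed.

Lemma intw_F2E x y :
  (iPhi X (gmul x y)
     *m hcomp (comp11 (Fob F' x) (Fob F' y)) (Fob F' (gmul x y)) (ifun X) (ifun X)
          (F2 F' x y) (id2 (ifun X))
   = hcomp (ifun X) (ifun X) (comp11 (Fob F x) (Fob F y)) (Fob F (gmul x y))
       (id2 (ifun X)) (F2 F x y)
     *m castmx (esym (mulnA _ _ _), erefl)
          (hcomp (comp11 (Fob F' x) (ifun X)) (comp11 (ifun X) (Fob F x))
             (Fob F y) (Fob F y) (iPhi X x) (id2 (Fob F y)))
     *m castmx (mulnA _ _ _, mulnA _ _ _)
          (hcomp (Fob F' x) (Fob F' x)
             (comp11 (Fob F' y) (ifun X)) (comp11 (ifun X) (Fob F y))
             (id2 (Fob F' x)) (iPhi X y)))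
  <-> c' x y *: intw_mx X (gmul x y) = c x y *: (intw_mx X x *m intw_mx X y).
Proof.
rewrite -mul_mx_scalar -mul_scalar_mx mulmxA; apply: mxeq_eq_iff.
  apply: mxeq_mul; first exact: iPhi_mxeq.
  apply: hcomp_scalar_l; [exact: gauge_id11 | | exact: mxeq_refl].
  by move=> a; apply: mxeq_trans (gauge_id11_comp11 _ _) (gauge_id11 _).
apply: mxeq_mul; last first.
  by apply: mxeq_castmx; apply: mxeq_trans (hcomp_id11_l _) (iPhi_mxeq _ _).
apply: mxeq_mul.
  by apply: hcomp_scalar_r => //; [exact: gauge1 | exact: mxeq_refl].
apply: mxeq_castmx; apply: mxeq_trans (hcomp_id11_r _ _ _) (iPhi_mxeq _ _).
  exact: gauge1_id11_comp11.
exact: gauge1_comp11_id11.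
Qed.

Lemma intw_F0E :
  (castmx (etrans (mul1n _) (esym (muln1 _)), erefl)
     (hcomp (Fob F' gone) id11 (ifun X) (ifun X) (F0 F') (id2 (ifun X)))
   = hcomp (ifun X) (ifun X) (Fob F gone) id11 (id2 (ifun X)) (F0 F)
     *m iPhi X gone)
  <-> intw_mx X gone = 1%:M.
Proof.
apply: (iff_trans (B := 1%:M = 1%:M *m intw_mx X gone)).
  apply: mxeq_eq_iff.
    apply: mxeq_castmx; exact: (@hcomp_scalar_l (Fob F' gone) id11 (ifun X) (F0 F') 1
      gauge_id11 gauge_id11 (mxeq_refl _)).
  apply: mxeq_mul; last exact: iPhi_mxeq.
  exact: (@hcomp_scalar_r (ifun X) id11 (Fob F gone) (F0 F) 1
    (gauge1 Xmor) erefl erefl (mxeq_refl _)).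
by rewrite mul1mx; split=> ->.
Qed.

End Translation.

Lemma is_intw_IcharE (X : intw F F') :
  is_intw X <->
  is_mor11 (ifun X) /\
  [/\ forall x, intw_mx X x \in unitmx,
      forall phi, b' (gam phi) *: intw_mx X (s2dom phi)
                  = b (gam phi) *: intw_mx X (s2dom phi),
      forall x y, c' x y *: intw_mx X (gmul x y)
                  = c x y *: (intw_mx X x *m intw_mx X y) &
      intw_mx X gone = 1%:M].
Proof.
split=> [[Xmor Xinv Xnat XF2 XF0] | [Xmor [Xinv Xnat XF2 XF0]]].
  split=> //; split.
  - by move=> x; apply/intw_invertibleE.
  - by move=> phi; apply/(intw_naturalE Xmor).
  - by move=> x y; apply/(intw_F2E Xmor).
  - exact/(intw_F0E Xmor).
split=> //.
- by move=> x; apply/intw_invertibleE.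
- by move=> phi; apply/(intw_naturalE Xmor).
- by move=> x y; apply/(intw_F2E Xmor).
- exact/(intw_F0E Xmor).
Qed.

Lemma is_2intw_IcharE (X Y : intw F F') (t : mor2 (ifun X) (ifun Y)) :
  is_mor11 (ifun X) -> is_mor11 (ifun Y) ->
  is_2intw t <-> forall x, t *m intw_mx X x = intw_mx Y x *m t.
Proof.
move=> Xmor Ymor.
have E x := mxeq_eq_iff (mxeq_mul (iPhi_mxeq Y x) (hcomp_id11_l t))
  (mxeq_mul (hcomp_id11_r t (gauge1 Xmor) (gauge1 Ymor)) (iPhi_mxeq X x)).
by split=> H x; [symmetry; apply/(E x) | apply/(E x)].
Qed.

End IntertwinersOfCharacters.

Section HomToPRep.
Variable G : special2group.
Variables (b b' : s2mor G -> C) (c c' : s2obj G -> s2obj G -> C).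
Variable z : s2obj G -> s2obj G -> C.
Local Notation F := (Ichar b c).
Local Notation F' := (Ichar b' c').
Hypothesis c_neq0 : forall x y, c x y != 0.
Hypothesis zE : forall x y, z x y = c' x y / c x y.

Definition intw_prep : functor (HomCat F F') (PRepCat G z) :=
  @Functor (HomCat F F') (PRepCat G z)
    (fun X => @PRep G (mr (ifun X)) (intw_mx X)) (fun X Y t => t).

Lemma intw_prep_functor : is_functor intw_prep.
Proof.
split=> // [X /is_intw_IcharE[_ [Xinv _ XF2 XF0]] | X Y t].
  split=> // x y /=.
  by rewrite zE mulrC -scalerA XF2 scalerA mulVf ?scale1r.
by move=> [Xmor _ _ _ _] [Ymor _ _ _ _] /(is_2intw_IcharE _ Xmor Ymor).
Qed.

Lemma intw_prep_fully_faithful : fully_faithful intw_prep.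
Proof.
move=> X Y [Xmor _ _ _ _] [Ymor _ _ _ _]; split=> // t /= tP.
by exists t; split=> //; apply/(is_2intw_IcharE _ Xmor Ymor).
Qed.

Definition intw_of_mx r (S : s2obj G -> 'M[C]_r) : intw F F' :=
  @Intw G F F' (@Mor11 r (fun a => 1%:M))
    (fun x => castmx (esym (muln1 r), esym (mul1n r)) (S x)).

Lemma intw_mx_of_mx r (S : s2obj G -> 'M[C]_r) x : intw_mx (intw_of_mx S) x = S x.
Proof. by apply: mxeq_eq; apply: mxeq_castmx; exact: castmx_mxeq. Qed.

Lemma intw_of_mx_mor11 r (S : s2obj G -> 'M[C]_r) : is_mor11 (ifun (intw_of_mx S)).
Proof.
split=> [a|]; first exact: unitmx1.
exact: mxeq_eq (mxeq_trans (scalar_mxeq _ (muln1 r)) (mxeq_sym (castmx_mxeq _ _))).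
Qed.

Hypothesis b_eq : forall phi : s2mor G,
  b (gamma_inv (s2dom phi) phi) = b' (gamma_inv (s2dom phi) phi).

Lemma intw_prep_ess_surj : ess_surj intw_prep.
Proof.
case=> r S [Sinv S1 SM]; exists (intw_of_mx S); split.
  apply/is_intw_IcharE; split; first exact: intw_of_mx_mor11.
  split=> [x | phi | x y |]; rewrite ?intw_mx_of_mx ?b_eq //.
  by rewrite SM zE scalerA mulrCA mulfV ?mulr1.
exists 1%:M; split.
  by move=> x /=; rewrite intw_mx_of_mx mul1mx mulmx1.
by exists 1%:M; split=> [x /=||]; rewrite ?intw_mx_of_mx /= ?mul1mx ?mulmx1.
Qed.

End HomToPRep.

Lemma unitmx_dim0 n (A : 'M[C]_n) k : A \in unitmx -> k *: A = 0 -> k = 0 \/ n = 0%N.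
Proof.
case: n A => [|n] A; [by right | rewrite unitmxE => Au].
by move/eqP; rewrite scalemx_eq0 => /orP[/eqP|/eqP A0]; [left | move: Au; rewrite A0 det0 unitr0].
Qed.

Section DistinctCharacters.
Variable G : special2group.
Variables (b b' : s2mor G -> C) (c c' : s2obj G -> s2obj G -> C).
Local Notation F := (Ichar b c).
Local Notation F' := (Ichar b' c').
Variable u : s2mor G.
Hypotheses (u_pi1 : in_pi1 u) (bu_neq : b u <> b' u).

(* Naturality at u says (b' u - b u) P(e) = 0 with P(e) invertible. *)
Lemma intw_dim0 (X : intw F F') : is_intw X -> mr (ifun X) = 0%N.
Proof.
case/is_intw_IcharE=> _ [Xinv Xnat _ _].
have := Xnat u; rewrite u_pi1 gamma_inv1 // => /eqP.
rewrite -subr_eq0 -scalerBl => /eqP /(unitmx_dim0 (Xinv gone)) [/eqP|//].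
by rewrite subr_eq0 => /eqP bu; case: bu_neq.
Qed.

Definition to_unitCat : functor (HomCat F F') unitCat :=
  @Functor (HomCat F F') unitCat (fun _ => tt) (fun _ _ _ => tt).

Lemma Hom_distinct_chars_trivial : cat_equiv (HomCat F F') unitCat.
Proof.
exists to_unitCat; split=> //.
- move=> X Y XP YP; split=> [t t' _ _ _ | [] _].
    exact/thinmx_eq/intw_dim0.
  by exists 0; split=> // x; apply/thinmx_eq; rewrite /= (intw_dim0 XP).
- move=> [] _; exists (intw_of_mx b b' c c' (fun _ => (0 : 'M[C]_0))); split.
    apply/is_intw_IcharE; split; first exact: intw_of_mx_mor11.
    by split=> *; rewrite ?unitmxE ?det_mx00 ?unitr1 //; apply: thinmx_eq.
  by exists tt; split=> //; exists tt.
Qed.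

End DistinctCharacters.

Lemma PRep_iso (G : special2group) z r (S S' : s2obj G -> 'M[C]_r) (T : 'M[C]_r) :
  T \in unitmx -> (forall g, T *m S g = S' g *m T) ->
  @is_iso (PRepCat G z) (PRep S) (PRep S') T.
Proof.
move=> Tu TS; split=> //; exists (invmx T); split=> [g /=||]; last 2 first.
- exact: mulVmx.
- exact: mulmxV.
by rewrite -[S g](mulKmx Tu) TS mulmxA mulmxK.
Qed.

Section EndMonoidal.
Variable G : special2group.
Variables (b : s2mor G -> C) (c : s2obj G -> s2obj G -> C).
Local Notation F := (Ichar b c).
Hypothesis c_neq0 : forall x y, c x y != 0.

Lemma intw_mx_id g : intw_mx (intw_id F) g = 1%:M.
Proof. by apply: mxeq_eq; do 2 apply: mxeq_castmx; exact: mxeq_refl. Qed.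

Lemma intw_mx_comp (X Y : intw F F) g : is_mor11 (ifun X) ->
  let s := mgauge (ifun X) (mr (ifun Y)) in
  intw_mx (intw_comp X Y) g = s *m (intw_mx X g *t intw_mx Y g) *m invmx s.
Proof.
move=> Xmor s; have su : s \in unitmx := gauge_unit _ Xmor.
have EY : hcomp (ifun X) (ifun X) (comp11 (Fob F g) (ifun Y))
            (comp11 (ifun Y) (Fob F g)) (id2 (ifun X)) (iPhi Y g)
          =~ s *m (1%:M *t intw_mx Y g) *m invmx s.
  apply: mxeq_mul; last by apply/mxeq_inv/gauge_eq; rewrite /= mul1n.
  apply: mxeq_mul; first by apply: gauge_eq; rewrite /= muln1.
  exact: mxeq_tens (mxeq_refl _) (iPhi_mxeq _ _).
have EX : hcomp (comp11 (Fob F g) (ifun X)) (comp11 (ifun X) (Fob F g))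
            (ifun Y) (ifun Y) (iPhi X g) (id2 (ifun Y))
          =~ s *m (intw_mx X g *t 1%:M) *m invmx s.
  apply: mxeq_mul (mxeq_inv (gauge_id11_comp11 _ _)).
  exact: mxeq_mul (gauge_comp11_id11 _ Xmor) (mxeq_tens (iPhi_mxeq _ _) (mxeq_refl _)).
apply: mxeq_eq; apply: mxeq_trans (mxeq_sym (iPhi_mxeq _ _)) _.
apply: mxeq_castmx; apply: mxeq_trans (mxeq_mul EY (mxeq_castmx _ EX)) _.
rewrite -!mulmxA (mulmxA (invmx s)) mulVmx // mul1mx.
by rewrite !mulmxA -(mulmxA s) tensmx_mul mul1mx mulmx1; exact: mxeq_refl.
Qed.

Definition End_to_Rep : monfunctor (EndMon F) (RepMon G) :=
  @MonFunctor (EndMon F) (RepMon G) (intw_prep b b c c (fun _ _ => 1))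
    (fun X Y => mgauge (ifun X) (mr (ifun Y))) (1%:M : 'M[C]_1).

Lemma End_to_Rep_strong : is_strong_monoidal End_to_Rep.
Proof.
have one_E x y : (fun _ _ => 1 : C) x y = c x y / c x y by rewrite divff.
split; split.
- exact: intw_prep_functor one_E.
- move=> X Y [Xmor _ _ _ _] _; apply: PRep_iso; first exact: gauge_unit.
  by move=> g; rewrite intw_mx_comp // mulmxKV ?gauge_unit.
- by apply: PRep_iso; rewrite ?unitmx1 // => g; rewrite intw_mx_id mulmx1.
- move=> X X' Y Y' t t' [Xmor _ _ _ _] _ _ _ _ _ /=.
  by rewrite /hcomp mulmxKV ?gauge_unit.
- move=> X Y Z [Xmor _ _ _ _] _ _ /=.
  rewrite -(mulmxA _ (invmx _ *t _)) tensmx_mul mulVmx ?gauge_unit //.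
  rewrite mul1mx tensmx11 mulmx1.
  apply: (@mxeq_eq C).
  apply: mxeq_trans (mxeq_mul (castmx_mxeq _ _) (castmx_mxeq _ _)) _.
  rewrite mul1mx; apply: mxeq_sym.
  apply: mxeq_trans (mxeq_mul (mxeq_refl _) (mxeq_mul (mxeq_refl _) (castmx_mxeq _ _))) _.
  by rewrite mulmx1; exact: mxeq_refl.
- move=> X _ /=; rewrite tensmx11; apply: (@mxeq_eq C).
  apply: mxeq_trans (mxeq_mul (castmx_mxeq _ _)
    (mxeq_mul (castmx_mxeq _ _) (scalar_mxeq 1 (mul1n _)))) _.
  by rewrite !mul1mx; apply: mxeq_sym; exact: castmx_mxeq.
- move=> X [Xmor _ _ _ _] /=; rewrite tensmx11; apply: (@mxeq_eq C).
  apply: mxeq_trans (mxeq_mul (castmx_mxeq _ _)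
    (mxeq_mul (gauge1 Xmor) (scalar_mxeq 1 (muln1 _)))) _.
  by rewrite !mul1mx; apply: mxeq_sym; exact: castmx_mxeq.
Qed.

End EndMonoidal.

Lemma cobound2_div (G : special2group) (c c' : s2obj G -> s2obj G -> C) x y w :
  (forall x y, c x y != 0) -> (forall x y, c' x y != 0) ->
  cobound2 (fun x y => c' x y / c x y) x y w = cobound2 c' x y w / cobound2 c x y w.
Proof. by move=> c_neq0 c'_neq0; rewrite /cobound2; field; rewrite !c_neq0 !c'_neq0.
Qed.

Unset Implicit Arguments.

Theorem mainTheorem16 (G : special2group)
    (b b' : s2mor G -> C) (c c' : s2obj G -> s2obj G -> C) :
  char_data b c -> char_data b' c' ->
  [/\ (exists u, in_pi1 u /\ b u <> b' u) ->
        cat_equiv (HomCat (Ichar b c) (Ichar b' c')) unitCat,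
      (forall u, in_pi1 u -> b u = b' u) ->
        is_2cocycle (fun x y => c' x y / c x y) /\
        cat_equiv (HomCat (Ichar b c) (Ichar b' c'))
                  (PRepCat G (fun x y => c' x y / c x y)) &
      monoidal_equiv (EndMon (Ichar b c)) (RepMon G)].
Proof.
move=> [[b_neq0 _ _] [c_neq0 _ c_cob]] [_ [c'_neq0 _ c'_cob]]; split.
- by case=> u [u_pi1 bu]; exact: Hom_distinct_chars_trivial u_pi1 bu.
- move=> b_eq; split.
    split=> [x y | x y w]; first by rewrite mulf_neq0 ?invr_neq0.
    have alpha_pi1 : in_pi1 (alpha3 x y w) by apply: gamma_inv_pi1; rewrite s2dom_assoc.
    by rewrite cobound2_div // c_cob c'_cob -b_eq // divff // b_neq0.
  have b_gam phi : b (gamma_inv (s2dom phi) phi) = b' (gamma_inv (s2dom phi) phi).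
    exact/b_eq/gamma_inv_pi1.
  exists (intw_prep b b' c c' (fun x y => c' x y / c x y)).
  by split; [exact: intw_prep_functor | exact: intw_prep_fully_faithful |
             exact: intw_prep_ess_surj].
- exists (End_to_Rep b c); split; first exact: End_to_Rep_strong.
    exact: intw_prep_fully_faithful.
  by apply: intw_prep_ess_surj => // x y; rewrite divff.
Qed.
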